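(* Let $\vec d=(\vec a,\vec b)$ be a bidegree sequence of length $n$ with $\sum_i a_i=\sum_i b_i=n\bar c$, and let $M=\max\vec d$ with $M<n$. (i) If $k:=\#\{i: a_i=M\}$ satisfies $M\le k$, then $\vec d$ is graphic with loops. (ii) More generally, if there is $k\in\mathbb{N}$ with $M\le k$ and $Mk\le n\bar c$, then $\vec d$ is graphic with loops.
   Context: A bidegree sequence of length $n$ is a pair $\vec d=(\vec a,\vec b)$ with $\vec a=(a_1,\dots,a_n)\in\mathbb{N}_0^n$ and $\vec b=(b_1,\dots,b_n)\in\mathbb{N}_0^n$. It is graphic with loops if there is an $n\times n$ matrix with entries in $\{0,1\}$ whose $i$th row sum is $a_i$ and whose $i$th column sum is $b_i$ for every $i\in[1..n]$; it is graphic if such a matrix exists with all diagonal entries equal to $0$. $\max\vec d$ and $\min\vec d$ denote the maximum and minimum over all $2n$ entries $a_1,\dots,a_n,b_1,\dots,b_n$. The number $\bar c$ (the average degree) is defined by $\sum_i a_i=\sum_i b_i=n\bar c$. *)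

From mathcomp Require Import all_boot all_order all_algebra.
Set Implicit Arguments. Unset Strict Implicit. Unset Printing Implicit Defensive.

(* A bidegree sequence of length n is a pair (a, b) of functions 'I_n -> nat. *)

Definition graphic_with_loops (n : nat) (a b : 'I_n -> nat) : Prop :=
  exists A : 'M[bool]_n,
    (forall i : 'I_n, \sum_(j < n) (A i j : nat) = a i) /\
    (forall j : 'I_n, \sum_(i < n) (A i j : nat) = b j).

(* max over all 2n entries a_1..a_n, b_1..b_n (0 when n = 0). *)
Definition maxd (n : nat) (a b : 'I_n -> nat) : nat :=
  \max_(i < n) maxn (a i) (b i).

From mathcomp Require Import all_boot all_order all_algebra zify.
Set Implicit Arguments. Unset Strict Implicit. Unset Printing Implicit Defensive.

(* Let S be the common sum. Cut [0, S) into consecutive blocks of lengths a_i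
   ("row stubs") and, independently, into blocks of lengths b_j ("column
   stubs"). A permutation sigma of [0, S) that sends any two points at distance
   < M to points at distance >= M yields the matrix: put a 1 at (i, j) iff some
   stub x of row i has sigma x in column j. Two stubs of one row are closer
   than M, so their images fall into different columns, and every entry is
   hit at most once; the row and column sums are then the block lengths.
   Such a sigma exists when S >= M^2: write S = q M + r with q >= M, lay out
   [0, S) row by row in a grid of width M and read it back column by column. *)

Section TransposedGrid.
Variables (M q r : nat).
Hypotheses (M_gt0 : 0 < M) (r_lt_M : r < M) (M_le_q : M <= q).

(* Column C of the grid of width M holding q * M + r points has q + (C < r)
   entries and starts at position col_start C in column-major order. *)
Definition col_start C := C * q + minn C r.

Lemma col_startS C : col_start C.+1 = col_start C + q + (C < r).
Proof. rewrite /col_start mulSn; case: ltnP => Cr; lia. Qed.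

Lemma leq_col_start C C' : C <= C' -> col_start C <= col_start C'.
Proof. move=> le_CC'; rewrite /col_start leq_add ?leq_mul //; lia. Qed.

Lemma col_start_gap C C' : C < C' -> col_start C + q <= col_start C'.
Proof.
move=> lt_CC'; have := leq_col_start lt_CC'; rewrite col_startS; lia.
Qed.

Lemma col_start_max : col_start M = q * M + r.
Proof. by rewrite /col_start mulnC (minn_idPr (ltnW r_lt_M)). Qed.

(* Each column is read bottom-up: then two points in consecutive grid rows,
   whose columns are swapped, also land at distance > q. *)
Definition spread p := col_start (p %% M).+1 - (p %/ M).+1.

Lemma divn_lt_col_size p : p < q * M + r ->
  p %/ M < col_start (p %% M).+1 - col_start (p %% M).
Proof.
move=> pS; rewrite col_startS; have := divn_eq p M; have := ltn_pmod p M_gt0.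
move: (p %/ M) (p %% M) => R C C_lt_M p_eq.
case: ltnP => Cr; nia.
Qed.

Lemma spread_in_col p : p < q * M + r ->
  col_start (p %% M) <= spread p < col_start (p %% M).+1.
Proof.
move=> /divn_lt_col_size; rewrite /spread.
move: (col_start (p %% M).+1) (col_start (p %% M)) (p %/ M) => e s R; lia.
Qed.

Lemma spread_lt p : p < q * M + r -> spread p < q * M + r.
Proof.
move=> /spread_in_col /andP[_ /leq_trans]; apply.
by rewrite -col_start_max leq_col_start ?ltn_pmod.
Qed.

Lemma spread_inj x y : x < q * M + r -> y < q * M + r -> spread x = spread y -> x = y.
Proof.
move=> xS yS eq_s.
have /andP[x_lo x_hi] := spread_in_col xS; have /andP[y_lo y_hi] := spread_in_col yS.
have eq_C : x %% M = y %% M.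
  by case: (ltngtP (x %% M) (y %% M)) => // /leq_col_start; lia.
rewrite (divn_eq x M) (divn_eq y M) eq_C; congr (_ * _ + _).
move: eq_s (divn_lt_col_size xS) (divn_lt_col_size yS).
rewrite /spread eq_C; lia.
Qed.

Lemma near_divn_modn x y : x < y < x + M ->
  (y %/ M = x %/ M /\ x %% M < y %% M) \/ (y %/ M = (x %/ M).+1 /\ y %% M < x %% M).
Proof.
move=> /andP[lt_xy lt_y].
have le_R : x %/ M <= y %/ M by rewrite leq_div2r // ltnW.
have le_R1 : y %/ M <= (x %/ M).+1.
  by have := leq_div2r M (ltnW lt_y); rewrite divnDr ?dvdnn // divnn M_gt0 addn1.
have := divn_eq x M; have := divn_eq y M; have := ltn_pmod x M_gt0; have := ltn_pmod y M_gt0.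
move: le_R le_R1 lt_xy lt_y; move: (x %/ M) (y %/ M) (x %% M) (y %% M) => R1 R2 C1 C2.
have [-> | ne_R] := eqVneq R2 R1; first lia.
move=> le_R le_R1; have -> : R2 = R1.+1 by lia.
rewrite mulSn; move: (R1 * M) => T; lia.
Qed.

Lemma spread_far x y : x < y < x + M -> y < q * M + r ->
  spread x + M <= spread y \/ spread y + M <= spread x.
Proof.
move=> near yS; have xS : x < q * M + r by case/andP: near => /ltn_trans + _; apply.
have := divn_lt_col_size xS; have := divn_lt_col_size yS; rewrite /spread.
by case: (near_divn_modn near) => [[-> lt_C] | [-> lt_C]];
  have := col_start_gap (lt_C : _.+1 < _.+1); [left | right]; lia.
Qed.

End TransposedGrid.

Lemma exists_spreading_perm S M : M * M <= S ->
  exists sigma : 'I_S -> 'I_S, injective sigma /\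
    forall x y : 'I_S, x < y < x + M -> sigma x + M <= sigma y \/ sigma y + M <= sigma x.
Proof.
have [-> _ | M_gt0 MM_le_S] := posnP M.
  by exists id; split=> // x y; rewrite addn0 => /andP[/ltn_trans h /h]; rewrite ltnn.
have S_eq : S = S %/ M * M + S %% M := divn_eq S M.
have r_lt_M := ltn_pmod S M_gt0.
have M_le_q : M <= S %/ M by rewrite leq_divRL.
have spread_ltS (x : 'I_S) : spread M (S %/ M) (S %% M) x < S.
  by rewrite [X in _ < X]S_eq spread_lt // -S_eq.
exists (fun x => Ordinal (spread_ltS x)); split.
- move=> x y /(congr1 val) /= /spread_inj eq_xy.
  by apply: val_inj; apply: eq_xy; rewrite // -S_eq.
- by move=> x y near; apply: spread_far; rewrite // -S_eq.
Qed.

Lemma card_ord_interval S lo hi : hi <= S -> #|[set x : 'I_S | lo <= x < hi]| = hi - lo.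
Proof.
move=> hiS; rewrite -[hi - lo]muln1 -sum_nat_const_nat big_geq_mkord.
rewrite (big_ord_widen_cond _ (fun i => true && (lo <= i)) (fun=> 1) hiS) -sum1_card.
by apply: eq_bigl => x; rewrite inE.
Qed.

Section Blocks.
Variables (n : nat) (c : 'I_n -> nat).

Definition block_start (i : 'I_n) := \sum_(k < n | k < i) c k.

Definition in_block (i : 'I_n) x := block_start i <= x < block_start i + c i.

Lemma block_end_le_start (i j : 'I_n) : i < j -> block_start i + c i <= block_start j.
Proof.
move=> lt_ij; rewrite [block_start j](bigID (fun k : 'I_n => k < i)) /= leq_add //.
  apply: eq_leq; apply: eq_bigl => k.
  by case: (ltnP k i) => [k_lt_i|]; rewrite ?andbT ?andbF // (ltn_trans k_lt_i lt_ij).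
by rewrite (bigD1 i) ?lt_ij ?ltnn //= leq_addr.
Qed.

Lemma block_end_le_sum i : block_start i + c i <= \sum_k c k.
Proof.
rewrite [X in _ <= X](bigID (fun k : 'I_n => k < i)) leq_add //.
by rewrite (bigD1 i) ?ltnn //= leq_addr.
Qed.

Lemma in_block_inj x (i j : 'I_n) : in_block i x -> in_block j x -> i = j.
Proof.
rewrite /in_block => /andP[lo_i hi_i] /andP[lo_j hi_j].
case: (ltngtP i j) => [/block_end_le_start | /block_end_le_start | /val_inj //]; lia.
Qed.

Lemma exists_block x : x < \sum_k c k -> exists i, in_block i x.
Proof.
suff below m : x < \sum_(k < n | k < m) c k -> exists i, in_block i x.
  by rewrite (eq_bigl (fun k : 'I_n => k < n)) => [|k]; [exact: below | rewrite ltn_ord].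
elim: m => [|m IHm]; first by rewrite big_pred0.
have [m_lt_n | n_le_m] := ltnP m n; last first.
  rewrite (eq_bigl (fun k : 'I_n => k < m)) // => k.
  by rewrite ltnS leq_eqVlt ltn_eqF // (leq_trans (ltn_ord k)).
rewrite (bigD1 (Ordinal m_lt_n)) //= (eq_bigl (fun k : 'I_n => k < m)); last first.
  by move=> k; rewrite ltnS leq_eqVlt -val_eqE /=; case: ltngtP.
case: (ltnP x (block_start (Ordinal m_lt_n))) => [/IHm // | lo].
by exists (Ordinal m_lt_n); rewrite /in_block lo addnC.
Qed.

Lemma exists_block_labelling S : \sum_k c k = S -> exists own : 'I_S -> 'I_n,
  (forall i, #|[set x | own x == i]| = c i) /\
  (forall x y, own x = own y -> x <= y -> y < x + c (own x)).
Proof.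
move=> sum_c; have /fin_all_exists [own own_in] : forall x : 'I_S, exists i, in_block i x.
  by move=> x; apply: exists_block; rewrite sum_c.
exists own; split=> [i | x y eq_own le_xy].
- have -> : [set x | own x == i] = [set x : 'I_S | block_start i <= x < block_start i + c i].
    apply/setP=> x; rewrite !inE; apply/eqP/idP => [<- | in_i]; first exact: own_in.
    exact: in_block_inj (own_in x) in_i.
  by rewrite (card_ord_interval (block_start i)) ?addKn // -sum_c block_end_le_sum.
- by have := own_in x; have := own_in y; rewrite /in_block -eq_own; lia.
Qed.

End Blocks.

Lemma sum_nat_of_bool_card (I : finType) (P : pred I) : \sum_i (P i : nat) = #|[set i | P i]|.
Proof.
by rewrite -sum1_card [RHS]big_mkcond; apply: eq_bigr => i _; rewrite inE; case: (P i).
Qed.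

Lemma sum_incidence_row (X : finType) n m (f : X -> 'I_n) (g : X -> 'I_m) (i : 'I_n) :
  {in [set x | f x == i] &, injective g} ->
  \sum_j ([exists x, (f x == i) && (g x == j)] : nat) = #|[set x | f x == i]|.
Proof.
move=> g_inj; rewrite sum_nat_of_bool_card -(card_in_imset g_inj); apply: eq_card => j.
rewrite !inE; apply/existsP/imsetP => [[x /andP[fx /eqP <-]] | [x]].
  by exists x; rewrite ?inE.
by rewrite inE => fx ->; exists x; rewrite fx eqxx.
Qed.

Lemma graphic_with_loops_of_labelling (X : finType) n (f g : X -> 'I_n) (a b : 'I_n -> nat) :
  injective (fun x => (f x, g x)) ->
  (forall i, #|[set x | f x == i]| = a i) -> (forall j, #|[set x | g x == j]| = b j) ->
  graphic_with_loops a b.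
Proof.
move=> fg_inj card_f card_g.
exists (\matrix_(i, j) [exists x, (f x == i) && (g x == j)])%R; split=> [i | j].
- under eq_bigr => j _ do rewrite mxE.
  rewrite sum_incidence_row -?card_f // => x y; rewrite !inE => /eqP fx /eqP fy gxy.
  by apply: fg_inj; rewrite /= fx fy gxy.
- under eq_bigr => i _ do rewrite mxE (eq_existsb (fun x => andbC _ _)).
  rewrite sum_incidence_row -?card_g // => x y; rewrite !inE => /eqP gx /eqP gy fxy.
  by apply: fg_inj; rewrite /= gx gy fxy.
Qed.

Lemma graphic_with_loops_of_square_le_sum n (a b : 'I_n -> nat) M :
  (forall i, a i <= M) -> (forall j, b j <= M) ->
  \sum_i a i = \sum_i b i -> M * M <= \sum_i a i -> graphic_with_loops a b.
Proof.
move=> a_le b_le sum_ab MM_le.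
have [own_a [card_a near_a]] := @exists_block_labelling n a _ erefl.
have [own_b [card_b near_b]] := @exists_block_labelling n b _ (esym sum_ab).
have [sigma [sigma_inj far]] := exists_spreading_perm MM_le.
have separated (x y : 'I_(\sum_i a i)) :
    x < y -> own_a x = own_a y -> own_b (sigma x) <> own_b (sigma y).
  move=> lt_xy /near_a/(_ (ltnW lt_xy)) near_xy eq_b.
  have near_M : y < x + M by have := a_le (own_a x); lia.
  have := far x y; rewrite lt_xy near_M => /(_ isT).
  have := b_le (own_b (sigma x)); have := b_le (own_b (sigma y)).
  case: (leqP (sigma x) (sigma y)) => [le_s | lt_s].
  - have := near_b _ _ eq_b le_s; lia.
  - have := near_b _ _ (esym eq_b) (ltnW lt_s); lia.
apply: (graphic_with_loops_of_labelling (f := own_a) (g := own_b \o sigma)) => //.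
  move=> x y [eq_a eq_b]; case: (ltngtP x y) => [/separated | /separated | /val_inj //].
    by move/(_ eq_a eq_b).
  by move/(_ (esym eq_a) (esym eq_b)).
move=> j.
by rewrite -card_b -[RHS](card_preimset _ sigma_inj); apply: eq_card => x; rewrite !inE.
Qed.

Theorem corollary2 (n : nat) (a b : 'I_n -> nat) :
  \sum_(i < n) a i = \sum_(i < n) b i ->
  maxd a b < n ->
  (maxd a b <= #|[pred i : 'I_n | a i == maxd a b]| -> graphic_with_loops a b) /\
  (forall k : nat, maxd a b <= k -> maxd a b * k <= \sum_(i < n) a i ->
     graphic_with_loops a b).
Proof.
move=> sum_ab _; set M := maxd a b.
have le_M i : maxn (a i) (b i) <= M by exact: leq_bigmax.
have a_le i : a i <= M by apply: leq_trans (le_M i); apply: leq_maxl.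
have b_le i : b i <= M by apply: leq_trans (le_M i); apply: leq_maxr.
have graphic_k k : M <= k -> M * k <= \sum_i a i -> graphic_with_loops a b.
  move=> M_le_k /(leq_trans (leq_mul (leqnn M) M_le_k)).
  exact: graphic_with_loops_of_square_le_sum a_le b_le sum_ab.
split=> // M_le_card; apply: (graphic_k _ M_le_card).
rewrite (bigID (fun i => a i == M)) /= -[X in X <= _]addn0 leq_add //.
by rewrite (eq_bigr (fun=> M)) => [|i /eqP //]; rewrite sum_nat_const mulnC.
Qed.
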